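(* Let $n_b\ge 1$, $d_l\ge 4$, $L\ge 4$, $M\ge 1$ be integers, and let $H$ be a quasi-cyclic SC-LDPC parity-check matrix with parameters $(n_b,d_l,L,M)$ and reuse $T=2$ (as defined in the context). Then, for every choice of the shift values $p_{x,y}$ satisfying the reuse-$2$ condition, the Tanner graph of $H$ contains a cycle of length at most $8$; in particular its girth is at most $8$.
   Context: Quasi-cyclic SC-LDPC matrix: fix integers $n_b\ge1$ (bit nodes per protograph; one check node per protograph), $d_l\ge 2$, $L\ge1$, $M\ge1$. $H$ is a binary block matrix with $L+d_l-1$ block rows (indexed $x=1,\dots,L+d_l-1$) and $n_bL$ block columns (indexed $y=1,\dots,n_bL$), each block of size $M\times M$. For a block column $y$ put $t(y)=\lceil y/n_b\rceil$. Block $(x,y)$ is the all-zero matrix unless $t(y)\le x\le t(y)+d_l-1$, in which case it equals the circulant permutation matrix $I_{(p_{x,y})}$ for a shift value $p_{x,y}\in\{0,\dots,M-1\}$; here $I_{(p)}$ is the $M\times M$ matrix whose row $r$ ($0\le r\le M-1$) has a single $1$, in column $(r+p)\bmod M$, and zeros elsewhere. Reuse-$T$ condition (periodic time-variant construction with period $T$): $p_{x+T,\,y+Tn_b}=p_{x,y}$ whenever both $(x,y)$ and $(x+T,y+Tn_b)$ are nonzero blocks of $H$; otherwise the shift values are arbitrary. The Tanner graph of $H$ is the bipartite graph with one bit node per column and one check node per row of $H$, a bit node and check node being adjacent iff the corresponding entry of $H$ is $1$. The girth is the length of a shortest cycle in the Tanner graph. *)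

From mathcomp Require Import all_boot.
Set Implicit Arguments. Unset Strict Implicit. Unset Printing Implicit Defensive.

(* Block rows x = 1..L+dl-1, block columns y = 1..nb*L (1-indexed as in the paper).
   A check node is a pair (x, r) : block row x, row r < M inside the block.
   A bit node is a pair (y, c) : block column y, column c < M inside the block. *)

Definition tcol (nb y : nat) : nat := (y + nb - 1) %/ nb.

(* block (x,y) is a nonzero block (a circulant permutation matrix) *)
Definition nzblock (nb dl L : nat) (x y : nat) : bool :=
  [&& 1 <= x, x <= L + dl - 1, 1 <= y, y <= nb * L,
      tcol nb y <= x & x <= tcol nb y + dl - 1].

Definition shifts_ok (nb dl L M : nat) (p : nat -> nat -> nat) : Prop :=
  forall x y, nzblock nb dl L x y -> p x y < M.

Definition reuse (T nb dl L : nat) (p : nat -> nat -> nat) : Prop :=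
  forall x y, nzblock nb dl L x y -> nzblock nb dl L (x + T) (y + T * nb) ->
    p (x + T) (y + T * nb) = p x y.

Definition check_node (dl L M : nat) (v : nat * nat) : bool :=
  [&& 1 <= v.1, v.1 <= L + dl - 1 & v.2 < M].
Definition bit_node (nb L M : nat) (w : nat * nat) : bool :=
  [&& 1 <= w.1, w.1 <= nb * L & w.2 < M].

(* Entry of H in row r of block row x, column c of block column y is 1:
   block (x,y) is I_(p x y), whose row r has its 1 in column (r + p) mod M. *)
Definition adj (nb dl L M : nat) (p : nat -> nat -> nat)
    (v : nat * nat) (w : nat * nat) : bool :=
  [&& check_node dl L M v, bit_node nb L M w, nzblock nb dl L v.1 w.1
    & w.2 == (v.2 + p v.1 w.1) %% M].

Definition tanner_cycle (nb dl L M : nat) (p : nat -> nat -> nat)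
    (cs bs : seq (nat * nat)) : Prop :=
  let k := size cs in
  [/\ 2 <= k, size bs = k, uniq cs, uniq bs &
      forall i, i < k ->
        adj nb dl L M p (nth (0,0) cs i) (nth (0,0) bs i) /\
        adj nb dl L M p (nth (0,0) cs ((i + 1) %% k)) (nth (0,0) bs i)].

Definition cycle_length (cs : seq (nat * nat)) : nat := 2 * size cs.

From mathcomp Require Import all_boot zify.

Set Implicit Arguments.
Unset Strict Implicit.
Unset Printing Implicit Defensive.

(* Label the block columns by their protograph index: the block
   column [lead_col nb k] is the first one of the (k+1)-th group, so its nonzero
   blocks sit in block rows k+1 .. k+dl.  In the base (protograph) graph the
   closed walk of length 8
       row 2 - col0 - row 4 - col3 - row 6 - col2 - row 4 - col1 - row 2
   uses, by the reuse-2 condition, each of the four shift values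
   p 2 col0, p 4 col0, p 2 col1, p 4 col1 once "forwards" and once "backwards".
   A walk in the base graph lifts to the Tanner graph of the circulant lift by
   choosing each new check row as the unique solution of a congruence mod M
   ([back_row]); it closes up because the alternating sum of its shifts is 0
   ([circulant_walk_closes]).  The lift is an 8-cycle unless its two visits to
   block row 4 hit the same check node, in which case its middle part is a
   4-cycle ([lifted_walk_cycle]).  The theorem instantiates this with the walk
   above ([lemma2]); shifts only matter modulo M. *)

Lemma tanner_cycle2 nb dl L M p (c0 c1 b0 b1 : nat * nat) :
  uniq [:: c0; c1] -> uniq [:: b0; b1] ->
  adj nb dl L M p c0 b0 -> adj nb dl L M p c1 b0 ->
  adj nb dl L M p c1 b1 -> adj nb dl L M p c0 b1 ->
  tanner_cycle nb dl L M p [:: c0; c1] [:: b0; b1].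
Proof.
by move=> *; split=> //= - [|[|//]].
Qed.

Lemma tanner_cycle4 nb dl L M p (c0 c1 c2 c3 b0 b1 b2 b3 : nat * nat) :
  uniq [:: c0; c1; c2; c3] -> uniq [:: b0; b1; b2; b3] ->
  adj nb dl L M p c0 b0 -> adj nb dl L M p c1 b0 ->
  adj nb dl L M p c1 b1 -> adj nb dl L M p c2 b1 ->
  adj nb dl L M p c2 b2 -> adj nb dl L M p c3 b2 ->
  adj nb dl L M p c3 b3 -> adj nb dl L M p c0 b3 ->
  tanner_cycle nb dl L M p [:: c0; c1; c2; c3] [:: b0; b1; b2; b3].
Proof.
by move=> *; split=> //= - [|[|[|[|//]]]].
Qed.

Lemma adj_shift nb dl L M p x r y :
  r < M -> nzblock nb dl L x y ->
  adj nb dl L M p (x, r) (y, (r + p x y) %% M).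
Proof.
move=> rM nz; have M0 : 0 < M by apply: leq_ltn_trans rM.
move: (nz) => /and5P [x1 xL y1 yL _].
by rewrite /adj /check_node /bit_node /= x1 xL rM y1 yL ltn_pmod // nz /=.
Qed.

Definition back_row (M c b : nat) : nat := (c + (M - b %% M)) %% M.

Lemma back_row_lt M c b : 0 < M -> back_row M c b < M.
Proof. exact: ltn_pmod. Qed.

Lemma back_rowP M c b : 0 < M -> back_row M c b + b = c %[mod M].
Proof.
move=> M0; rewrite /back_row modnDml -modnDmr -addnA.
by rewrite subnK ?modnDr // ltnW // ltn_pmod.
Qed.

Lemma circulant_walk_closes M r0 r1 r2 r3 a0 a1 a2 a3 b0 b1 b2 b3 :
  r1 + b0 = r0 + a0 %[mod M] -> r2 + b1 = r1 + a1 %[mod M] ->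
  r3 + b2 = r2 + a2 %[mod M] ->
  a0 + a1 + a2 + a3 = b0 + b1 + b2 + b3 ->
  r3 + a3 = r0 + b3 %[mod M].
Proof.
move=> + + + sum_ab.
(* adding the three congruences and a3, then cancelling r1 + r2 + b0 + b1 + b2 *)
have lhsE : r1 + b0 + (r2 + b1) + (r3 + b2) + a3
          = (r1 + r2 + b0 + b1 + b2) + (r3 + a3) by lia.
have rhsE : r0 + a0 + (r1 + a1) + (r2 + a2) + a3
          = (r1 + r2 + b0 + b1 + b2) + (r0 + b3) by lia.
move=> e1 e2 e3.
have congD u v w z : u = v %[mod M] -> w = z %[mod M] -> u + w = v + z %[mod M].
  by move=> uv wz; rewrite -modnDm uv wz modnDm.
have := congD _ _ a3 a3 (congD _ _ _ _ (congD _ _ _ _ e1 e2) e3) erefl.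
by rewrite lhsE rhsE => /eqP; rewrite eqn_modDl => /eqP.
Qed.

Section LiftedWalk.

Variables (nb dl L M : nat) (p : nat -> nat -> nat).
Local Notation nz := (nzblock nb dl L).
Local Notation adjH := (adj nb dl L M p).

Lemma adj_back x y r c :
  r < M -> nz x y -> r + p x y = c %[mod M] -> adjH (x, r) (y, c %% M).
Proof. by move=> rM nzxy <-; apply: adj_shift. Qed.

Lemma lifted_walk_cycle x0 x1 x2 y0 y1 y2 y3 :
  0 < M -> uniq [:: x0; x1; x2] -> uniq [:: y0; y1; y2; y3] ->
  nz x0 y0 -> nz x1 y0 -> nz x1 y1 -> nz x2 y1 ->
  nz x2 y2 -> nz x1 y2 -> nz x1 y3 -> nz x0 y3 ->
  p x0 y0 + p x1 y1 + p x2 y2 + p x1 y3 = p x1 y0 + p x2 y1 + p x1 y2 + p x0 y3 ->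
  exists cs bs, tanner_cycle nb dl L M p cs bs /\ cycle_length cs <= 8.
Proof.
move=> M0 ux uy n00 n10 n11 n21 n22 n12 n13 n03 sum_shifts.
have [x01 x02 x12] : [/\ x0 != x1, x0 != x2 & x1 != x2].
  by apply/and3P; move: ux; rewrite /= !inE !negb_or !andbT andbA.
set r1 := back_row M (0 + p x0 y0) (p x1 y0).
set r2 := back_row M (r1 + p x1 y1) (p x2 y1).
set r3 := back_row M (r2 + p x2 y2) (p x1 y2).
have [r1M r2M r3M] : [/\ r1 < M, r2 < M & r3 < M] by split; apply: back_row_lt.
have e1 : r1 + p x1 y0 = 0 + p x0 y0 %[mod M] by apply: back_rowP.
have e2 : r2 + p x2 y1 = r1 + p x1 y1 %[mod M] by apply: back_rowP.
have e3 : r3 + p x1 y2 = r2 + p x2 y2 %[mod M] by apply: back_rowP.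
have e4 : r3 + p x1 y3 = 0 + p x0 y3 %[mod M].
  exact: circulant_walk_closes e1 e2 e3 sum_shifts.
case: (eqVneq r1 r3) => [r13 | r1r3].
- (* the two visits to block row x1 coincide: a 4-cycle *)
  exists [:: (x1, r1); (x2, r2)],
         [:: (y1, (r1 + p x1 y1) %% M); (y2, (r2 + p x2 y2) %% M)].
  split=> //; apply: tanner_cycle2.
  + by apply: (@map_uniq _ _ fst); case/andP: ux.
  + by apply: (@map_uniq _ _ fst); apply: (take_uniq 2 (drop_uniq 1 uy)).
  + exact: adj_shift.
  + exact: adj_back.
  + exact: adj_shift.
  + by rewrite r13; apply: adj_back.
-
  exists [:: (x0, 0); (x1, r1); (x2, r2); (x1, r3)],
         [:: (y0, (0 + p x0 y0) %% M); (y1, (r1 + p x1 y1) %% M);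
             (y2, (r2 + p x2 y2) %% M); (y3, (r3 + p x1 y3) %% M)].
  split=> //; apply: tanner_cycle4.
  + rewrite /= !inE !xpair_eqE [x2 == x1]eq_sym.
    by rewrite (negbTE x01) (negbTE x02) (negbTE x12) (negbTE r1r3) andbF.
  + exact: (@map_uniq _ _ fst).
  + exact: adj_shift.
  + exact: adj_back.
  + exact: adj_shift.
  + exact: adj_back.
  + exact: adj_shift.
  + exact: adj_back.
  + exact: adj_shift.
  + by rewrite e4; apply: adj_shift.
Qed.

End LiftedWalk.

Definition lead_col (nb k : nat) : nat := 1 + k * nb.

Lemma lead_col_inj nb : 0 < nb -> injective (lead_col nb).
Proof.
by move=> nb0 k l /addnI /eqP; rewrite eqn_mul2r eqn0Ngt nb0 => /eqP.
Qed.

Lemma tcol_lead_col nb k : 0 < nb -> tcol nb (lead_col nb k) = k.+1.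
Proof.
move=> nb0; rewrite /tcol /lead_col.
have -> : 1 + k * nb + nb - 1 = k.+1 * nb by rewrite mulSn; lia.
by rewrite mulnK.
Qed.

Lemma nzblock_lead_col nb dl L x k :
  0 < nb -> k < L -> k < x <= k + dl -> x <= L + dl - 1 ->
  nzblock nb dl L x (lead_col nb k).
Proof.
move=> nb0 kL /andP[kx xk] xL; rewrite /nzblock tcol_lead_col //.
have : k.+1 * nb <= L * nb by rewrite leq_mul2r kL orbT.
by rewrite mulSn /lead_col => colL; apply/and5P; split; lia.
Qed.

Lemma reuse2_lead_col nb dl L p x k :
  reuse 2 nb dl L p -> nzblock nb dl L x (lead_col nb k) ->
  nzblock nb dl L x.+2 (lead_col nb k.+2) ->
  p x.+2 (lead_col nb k.+2) = p x (lead_col nb k).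
Proof.
have shift2 : lead_col nb k + 2 * nb = lead_col nb k.+2.
  by rewrite /lead_col -addnA -mulnDl addn2.
by move=> reuse2 nz nz2; rewrite -addn2 -shift2 reuse2 ?addn2 ?shift2.
Qed.

Theorem lemma2 (nb dl L M : nat) (p : nat -> nat -> nat) :
  1 <= nb -> 4 <= dl -> 4 <= L -> 1 <= M ->
  shifts_ok nb dl L M p -> reuse 2 nb dl L p ->
  exists cs bs : seq (nat * nat),
    tanner_cycle nb dl L M p cs bs /\ cycle_length cs <= 8.
Proof.
move=> nb0 dl4 L4 M0 _ reuse2.
have nz x k : k < x <= k + dl -> x <= 6 -> k <= 3 ->
    nzblock nb dl L x (lead_col nb k).
  by move=> *; apply: nzblock_lead_col => //; lia.
have reuse_c x k : k < x <= k + dl -> x <= 4 -> k <= 1 ->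
    p x.+2 (lead_col nb k.+2) = p x (lead_col nb k).
  by move=> *; apply: (reuse2_lead_col reuse2); apply: nz; lia.
apply: (lifted_walk_cycle (x0 := 2) (x1 := 4) (x2 := 6) (y0 := lead_col nb 0)
         (y1 := lead_col nb 3) (y2 := lead_col nb 2) (y3 := lead_col nb 1));
  rewrite ?nz //; try lia.
- rewrite -[[:: _; _; _; _]]/(map (lead_col nb) [:: 0; 3; 2; 1]).
  by rewrite (map_inj_uniq (lead_col_inj nb0)).
- (* by reuse-2, both sides are p 2 col0 + p 2 col1 + p 4 col0 + p 4 col1 *)
  by rewrite !reuse_c; lia.
Qed.
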